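(* Let $\Gamma\subseteq\mathbb R^n$ be an open convex set, $S\subseteq\Gamma$ a nonempty convex set, and $f:\Gamma\to\mathbb R$ a Fréchet differentiable function that is quasiconvex on $\Gamma$. Let $\bar S=\arg\min\{f(x)\mid x\in S\}$. If the set $\{x\in\bar S\mid \nabla f(x)\neq 0\}$ is nonempty, then the normalized gradient $\nabla f(x)/\|\nabla f(x)\|$ is constant on this set; i.e., for all $x,y\in\bar S$ with $\nabla f(x)\ne0$, $\nabla f(y)\ne 0$ one has $\nabla f(x)/\|\nabla f(x)\|=\nabla f(y)/\|\nabla f(y)\|$.
   Context: A function $f:\Gamma\to\mathbb R$ on a convex set $\Gamma\subseteq\mathbb R^n$ is quasiconvex on $\Gamma$ iff $f(x+t(y-x))\le\max\{f(x),f(y)\}$ for all $x,y\in\Gamma$ and $t\in[0,1]$. $\|\cdot\|$ is the Euclidean norm. *)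

From mathcomp Require Import all_boot.
From Stdlib Require Import Reals.
Open Scope R_scope.

Definition vec (n : nat) := 'I_n -> R.

Definition vzero {n} : vec n := fun _ => 0.
Definition vadd {n} (u v : vec n) : vec n := fun i => u i + v i.
Definition vsub {n} (u v : vec n) : vec n := fun i => u i - v i.
Definition vscale {n} (a : R) (u : vec n) : vec n := fun i => a * u i.

Definition dot {n} (u v : vec n) : R := \big[Rplus/0]_(i < n) (u i * v i).
Definition norm {n} (u : vec n) : R := sqrt (dot u u).

Definition convex_in_Rn {n} (C : vec n -> Prop) : Prop :=
  forall x y t, C x -> C y -> 0 <= t <= 1 -> C (vadd x (vscale t (vsub y x))).

Definition open_in_Rn {n} (C : vec n -> Prop) : Prop :=
  forall x, C x -> exists eps, 0 < eps /\
    forall y, norm (vsub y x) < eps -> C y.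

Definition quasiconvex_on {n} (Gamma : vec n -> Prop) (f : vec n -> R) : Prop :=
  forall x y t, Gamma x -> Gamma y -> 0 <= t <= 1 ->
    f (vadd x (vscale t (vsub y x))) <= Rmax (f x) (f y).

Definition frechet_gradient {n} (Gamma : vec n -> Prop) (f : vec n -> R)
    (x g : vec n) : Prop :=
  forall eps, 0 < eps -> exists delta, 0 < delta /\
    forall h, norm h < delta -> Gamma (vadd x h) ->
      Rabs (f (vadd x h) - f x - dot g h) <= eps * norm h.

Definition argmin_on {n} (S : vec n -> Prop) (f : vec n -> R) (x : vec n) : Prop :=
  S x /\ forall y, S y -> f x <= f y.

(* Let g and k be the gradients at two minimizers x and y of f on S, so f x = f y.
   Moving from y along any h with <k,h> < 0 strictly decreases f; by quasiconvexity
   the whole segment from x to the new point lies in the sublevel set of f x, hence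
   <g, y + t h - x> <= 0.  As <g, y - x> >= 0 (x minimizes f on the segment [x,y] of S),
   this gives <g,h> <= 0.  So the open halfspace {<k,.> < 0} lies in {<g,.> <= 0},
   which forces g to be a positive multiple of k. *)
From HB Require Import structures.
From mathcomp Require Import all_boot.
From Stdlib Require Import Reals Lra Psatz FunctionalExtensionality.
Open Scope R_scope.

Set Implicit Arguments.
Unset Strict Implicit.

HB.instance Definition _ :=
  Monoid.isComLaw.Build R 0 Rplus (fun a b c => esym (Rplus_assoc a b c)) Rplus_comm Rplus_0_l.

Lemma sumR_scale n c (F : 'I_n -> R) :
  \big[Rplus/0]_(i < n) (c * F i) = c * \big[Rplus/0]_(i < n) F i.
Proof. by elim/big_rec2: _ => [|i x y _ ->]; ring. Qed.

Lemma sumR_eq0 n (F : 'I_n -> R) :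
  (forall i, 0 <= F i) -> \big[Rplus/0]_(i < n) F i = 0 -> forall i, F i = 0.
Proof.
move=> F_ge0 + i; rewrite (bigD1 i) //=.
set rest := \big[_/_]_(j < n | _) _.
have rest_ge0 : 0 <= rest.
  by apply: (big_ind (fun x => 0 <= x)) => [|a b|j _]; [lra|lra|apply: F_ge0].
by have := F_ge0 i; lra.
Qed.

Section EuclideanSpace.
Variable n : nat.
Implicit Types (u v w g k h : vec n) (c : R).

Lemma dot_ext u u' v v' :
  (forall i, u i = u' i) -> (forall i, v i = v' i) -> dot u v = dot u' v'.
Proof. by move=> Hu Hv; apply: eq_bigr => i _; rewrite Hu Hv. Qed.

Lemma norm_ext u v : (forall i, u i = v i) -> norm u = norm v.
Proof. by move=> Huv; rewrite /norm (dot_ext Huv Huv). Qed.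

Lemma dotC u v : dot u v = dot v u.
Proof. by apply: eq_bigr => i _; ring. Qed.

Lemma dotDr u v w : dot u (vadd v w) = dot u v + dot u w.
Proof. by rewrite /dot -big_split; apply: eq_bigr => i _ /=; rewrite /vadd; ring. Qed.

Lemma dotZr c u v : dot u (vscale c v) = c * dot u v.
Proof. by rewrite /dot -sumR_scale; apply: eq_bigr => i _; rewrite /vscale; ring. Qed.

Lemma dotZl c u v : dot (vscale c u) v = c * dot u v.
Proof. by rewrite dotC dotZr dotC. Qed.

Lemma dotBr u v w : dot u (vsub v w) = dot u v - dot u w.
Proof.
rewrite (dot_ext (u' := u) (v' := vadd v (vscale (-1) w))) // => [|i].
  by rewrite dotDr dotZr; ring.
by rewrite /vsub /vadd /vscale; ring.
Qed.

Lemma dotBl u v w : dot (vsub v w) u = dot v u - dot w u.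
Proof. by rewrite dotC dotBr !(dotC u). Qed.

Lemma dot_self_ge0 u : 0 <= dot u u.
Proof. by rewrite /dot; apply: (big_ind (fun x => 0 <= x)) => [|a b|i _]; [lra|lra|nra]. Qed.

Lemma dot_self_eq0 u : dot u u = 0 -> forall i, u i = 0.
Proof.
by move=> uu0 i; have := @sumR_eq0 _ (fun j => u j * u j) (fun j => ltac:(nra)) uu0 i; nra.
Qed.

Lemma dot_self_gt0 u : u <> vzero -> 0 < dot u u.
Proof.
move=> u_neq0; case: (Rle_lt_or_eq_dec _ _ (dot_self_ge0 u)) => // uu0.
by case: u_neq0; apply: functional_extensionality => i; apply: dot_self_eq0.
Qed.

Lemma norm_gt0 u : u <> vzero -> 0 < norm u.
Proof. by move=> /dot_self_gt0; apply: sqrt_lt_R0. Qed.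

Lemma normZ c u : norm (vscale c u) = Rabs c * norm u.
Proof.
rewrite /norm dotZl dotZr -Rmult_assoc sqrt_mult_alt; last nra.
by rewrite -sqrt_Rsqr_abs.
Qed.

Lemma small_scale_norm u r : 0 < r ->
  exists b, 0 < b /\ forall t, 0 <= t < b -> norm (vscale t u) < r.
Proof.
move=> r_gt0; have nu_ge0 : 0 <= norm u by apply: sqrt_pos.
exists (r / (norm u + 1)); split; first by apply: Rdiv_lt_0_compat; lra.
move=> t [t_ge0 t_lt]; rewrite normZ Rabs_pos_eq //.
have : t * (norm u + 1) < r / (norm u + 1) * (norm u + 1) by nra.
by rewrite /Rdiv Rmult_assoc Rinv_l; nra.
Qed.

Lemma normalize_pos_scale lam u v : 0 < lam -> v <> vzero ->
  (forall i, u i = lam * v i) ->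
  forall i, vscale (/ norm u) u i = vscale (/ norm v) v i.
Proof.
move=> lam_gt0 /norm_gt0 nv_gt0 u_lamv i.
rewrite /vscale u_lamv (norm_ext (v := vscale lam v)) // normZ Rabs_pos_eq; last lra.
by field; lra.
Qed.

(* The vector (k.k) g - (g.k) k is orthogonal to k; the halfspace inclusion makes it
   orthogonal to g as well, hence to itself. *)
Lemma halfspace_inclusion_parallel g k : g <> vzero -> k <> vzero ->
  (forall h, dot k h < 0 -> dot g h <= 0) ->
  exists lam, 0 < lam /\ forall i, g i = lam * k i.
Proof.
move=> g_neq0 /dot_self_gt0 kk_gt0 incl.
have incl_closed h : dot k h <= 0 -> dot g h <= 0.
  move=> kh_le0; apply: Rnot_lt_le => gh_gt0.
  set c := dot g h / (2 * (Rabs (dot g k) + 1)).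
  have c_gt0 : 0 < c by apply: Rdiv_lt_0_compat; [|have := Rabs_pos (dot g k)]; lra.
  have c_small : c * (2 * (Rabs (dot g k) + 1)) = dot g h.
    by rewrite /c; field; have := Rabs_pos (dot g k); lra.
  have := incl (vsub h (vscale c k)); rewrite !dotBr !dotZr.
  by have := Rle_abs (dot g k); have := Rabs_pos (dot g k); nra.
set v := vsub (vscale (dot k k) g) (vscale (dot g k) k).
have kv0 : dot k v = 0 by rewrite dotBr !dotZr (dotC k g); ring.
have gv0 : dot g v = 0.
  have := incl_closed v ltac:(lra).
  have := incl_closed (vscale (-1) v); rewrite !dotZr kv0; lra.
have v_eq0 : forall i, v i = 0.
  by apply: dot_self_eq0; rewrite {1}/v dotBl !dotZl gv0 kv0; ring.
have gk_gt0 : 0 < dot g k.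
  have := incl (vscale (-1) k); rewrite !dotZr => gk_ge0.
  case: (Rle_lt_or_eq_dec 0 (dot g k)) => [|//|gk0]; first lra.
  case: g_neq0; apply: functional_extensionality => i.
  by have := v_eq0 i; rewrite /v /vsub /vscale -gk0 /vzero; nra.
exists (dot g k / dot k k); split; first by apply: Rdiv_lt_0_compat.
move=> i; have := v_eq0 i; rewrite /v /vsub /vscale => ?.
by field_simplify_eq; lra.
Qed.

End EuclideanSpace.

Lemma exists_pos_lt2 a b : 0 < a -> 0 < b -> exists t, 0 < t /\ t < a /\ t < b.
Proof.
move=> a_gt0 b_gt0; exists (Rmin a b / 2).
have := Rmin_l a b; have := Rmin_r a b; have := Rmin_pos a b a_gt0 b_gt0; lra.
Qed.

Section Gradient.
Variables (n : nat) (Gamma : vec n -> Prop) (f : vec n -> R).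

Lemma frechet_gradient_along x g h : frechet_gradient Gamma f x g -> dot g h <> 0 ->
  exists delta, 0 < delta /\ forall t, 0 < t < delta -> Gamma (vadd x (vscale t h)) ->
    Rabs (f (vadd x (vscale t h)) - f x - t * dot g h) <= t * Rabs (dot g h) / 2.
Proof.
move=> grad_x /Rabs_pos_lt gh_gt0; have nh_ge0 : 0 <= norm h by apply: sqrt_pos.
set e := Rabs (dot g h) / (2 * (norm h + 1)).
have e_gt0 : 0 < e by apply: Rdiv_lt_0_compat; lra.
have e_def : e * (2 * (norm h + 1)) = Rabs (dot g h) by rewrite /e; field; lra.
have [del [del_gt0 approx]] := grad_x e e_gt0.
have [delta [delta_gt0 small]] := small_scale_norm h del_gt0.
exists delta; split => // t t_in Gt.
have := approx _ (small t ltac:(lra)) Gt.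
rewrite dotZr normZ (Rabs_pos_eq t); last lra.
move/Rle_trans; apply; rewrite -e_def.
by have := Rmult_lt_0_compat t e ltac:(lra) e_gt0; nra.
Qed.

Lemma frechet_gradient_ascent x g h : frechet_gradient Gamma f x g -> 0 < dot g h ->
  exists delta, 0 < delta /\ forall t, 0 < t < delta -> Gamma (vadd x (vscale t h)) ->
    f x < f (vadd x (vscale t h)).
Proof.
move=> grad_x gh_gt0; have gh_neq0 : dot g h <> 0 by lra.
have [delta [delta_gt0 approx]] := frechet_gradient_along grad_x gh_neq0.
exists delta; split => // t t_in Gt; have := approx t t_in Gt.
by rewrite (Rabs_pos_eq (dot g h)); [split_Rabs; nra | lra].
Qed.

Lemma frechet_gradient_descent x g h : frechet_gradient Gamma f x g -> dot g h < 0 ->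
  exists delta, 0 < delta /\ forall t, 0 < t < delta -> Gamma (vadd x (vscale t h)) ->
    f (vadd x (vscale t h)) < f x.
Proof.
move=> grad_x gh_lt0; have gh_neq0 : dot g h <> 0 by lra.
have [delta [delta_gt0 approx]] := frechet_gradient_along grad_x gh_neq0.
exists delta; split => // t t_in Gt; have := approx t t_in Gt.
by rewrite (Rabs_left (dot g h)); [split_Rabs; nra | lra].
Qed.

Lemma argmin_gradient_ge0 S x y g : convex_in_Rn S -> (forall z, S z -> Gamma z) ->
  argmin_on S f x -> S y -> frechet_gradient Gamma f x g -> 0 <= dot g (vsub y x).
Proof.
move=> S_convex S_sub [Sx x_min] Sy grad_x.
apply: Rnot_lt_le => /(frechet_gradient_descent grad_x) [delta [delta_gt0 descent]].
have [t [t_gt0 [t_lt1 t_lt]]] := exists_pos_lt2 Rlt_0_1 delta_gt0.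
have St : S (vadd x (vscale t (vsub y x))) by apply: S_convex => //; lra.
by have := x_min _ St; have := descent t ltac:(lra) (S_sub _ St); lra.
Qed.

Lemma quasiconvex_gradient_le0 x z g : convex_in_Rn Gamma -> quasiconvex_on Gamma f ->
  Gamma x -> Gamma z -> f z <= f x -> frechet_gradient Gamma f x g ->
  dot g (vsub z x) <= 0.
Proof.
move=> G_convex qcvx Gx Gz fzx grad_x.
apply: Rnot_lt_le => /(frechet_gradient_ascent grad_x) [delta [delta_gt0 ascent]].
have [t [t_gt0 [t_lt1 t_lt]]] := exists_pos_lt2 Rlt_0_1 delta_gt0.
have t_in : 0 <= t <= 1 by lra.
have := qcvx x z t Gx Gz t_in; rewrite Rmax_left //.
by have := ascent t ltac:(lra) (G_convex _ _ _ Gx Gz t_in); lra.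
Qed.

Lemma open_gradient_descent y k h : open_in_Rn Gamma -> Gamma y ->
  frechet_gradient Gamma f y k -> dot k h < 0 ->
  exists t, 0 < t /\ Gamma (vadd y (vscale t h)) /\ f (vadd y (vscale t h)) < f y.
Proof.
move=> G_open Gy grad_y /(frechet_gradient_descent grad_y) [delta [delta_gt0 descent]].
have [r [r_gt0 ball_r]] := G_open y Gy.
have [b [b_gt0 small]] := small_scale_norm h r_gt0.
have [t [t_gt0 [t_lt t_lt']]] := exists_pos_lt2 delta_gt0 b_gt0.
have Gt : Gamma (vadd y (vscale t h)).
  apply: ball_r; rewrite (norm_ext (v := vscale t h)); first by apply: small; lra.
  by move=> i; rewrite /vsub /vadd; ring.
by exists t; split; [|split; [|apply: descent]].
Qed.

Lemma argmin_gradient_halfspace S x y : open_in_Rn Gamma -> convex_in_Rn Gamma ->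
  quasiconvex_on Gamma f -> convex_in_Rn S -> (forall z, S z -> Gamma z) ->
  forall g k, frechet_gradient Gamma f x g -> frechet_gradient Gamma f y k ->
  argmin_on S f x -> argmin_on S f y ->
  forall h, dot k h < 0 -> dot g h <= 0.
Proof.
move=> G_open G_convex qcvx S_convex S_sub g k grad_x grad_y x_min y_min h kh_lt0.
have [[Sx x_le] [Sy y_le]] := (x_min, y_min).
have fxy : f x = f y by have := x_le _ Sy; have := y_le _ Sx; lra.
have [t [t_gt0 [Gt ft]]] := open_gradient_descent G_open (S_sub _ Sy) grad_y kh_lt0.
have := argmin_gradient_ge0 S_convex S_sub x_min Sy grad_x.
have := quasiconvex_gradient_le0 G_convex qcvx (S_sub _ Sx) Gt ltac:(lra) grad_x.
rewrite (dot_ext (u' := g) (v' := vadd (vsub y x) (vscale t h))) // => [|i].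
  by rewrite dotDr dotZr; nra.
by rewrite /vsub /vadd /vscale; ring.
Qed.

End Gradient.

Theorem lemma5 (n : nat) (Gamma S : vec n -> Prop) (f : vec n -> R)
    (grad : vec n -> vec n) :
  open_in_Rn Gamma -> convex_in_Rn Gamma ->
  (forall x, S x -> Gamma x) -> (exists x, S x) -> convex_in_Rn S ->
  (forall x, Gamma x -> frechet_gradient Gamma f x (grad x)) ->
  quasiconvex_on Gamma f ->
  forall x y, argmin_on S f x -> argmin_on S f y ->
    grad x <> vzero -> grad y <> vzero ->
    forall i, vscale (/ norm (grad x)) (grad x) i = vscale (/ norm (grad y)) (grad y) i.
Proof.
move=> G_open G_convex S_sub _ S_convex grad_f qcvx x y x_min y_min gx_neq0 gy_neq0.
have grad_x := grad_f x (S_sub x x_min.1).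
have grad_y := grad_f y (S_sub y y_min.1).
have [lam [lam_gt0 gx_lam]] := halfspace_inclusion_parallel gx_neq0 gy_neq0
  (argmin_gradient_halfspace G_open G_convex qcvx S_convex S_sub grad_x grad_y x_min y_min).
exact: normalize_pos_scale lam_gt0 gy_neq0 gx_lam.
Qed.
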